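(* Let $k$ be a positive integer. If $v,w\in V$ lie in the same connected component of $\mathcal F_k$, then $\phi_k(v)=\phi_k(w)$.
   Context: The vertex set $V$ consists of all reduced fractions $p/q$ with $p,q\in\mathbb Z$, $\gcd(p,q)=1$, together with $1/0$; here $p/q$ and $(-p)/(-q)$ denote the same vertex. For vertices define $d(p/q,a/b)=|pb-qa|$. The graph $\mathcal F_k$ has vertex set $V$, with an edge between $p/q$ and $a/b$ exactly when $d(p/q,a/b)=k$. An element $(a,b)\in(\mathbb Z/k\mathbb Z)^2$ is admissible if for $\lambda\in\mathbb Z/k\mathbb Z$, $(\lambda a,\lambda b)=0$ implies $\lambda=0$; $\mathcal L_k$ is the set of admissible elements modulo $v\sim\lambda v$ for units $\lambda\in(\mathbb Z/k\mathbb Z)^*$; $\phi_k:V\to\mathcal L_k$ sends $p/q$ to the class of $(p\bmod k,q\bmod k)$. *)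

From Stdlib Require Import ZArith Relations.
Open Scope Z_scope.

(* A representative of a vertex p/q: a pair (p,q) of coprime integers
   (this includes 1/0 = (1,0) and (-1,0)). *)
Definition is_vertex (v : Z * Z) : Prop := Z.gcd (fst v) (snd v) = 1.

(* p/q and (-p)/(-q) denote the same vertex. *)
Definition same_vertex (v w : Z * Z) : Prop :=
  w = v \/ w = (- fst v, - snd v).

(* d(p/q, a/b) = |pb - qa| (independent of the sign representative). *)
Definition dist (v w : Z * Z) : Z :=
  Z.abs (fst v * snd w - snd v * fst w).

Definition edgeF (k : Z) (v w : Z * Z) : Prop :=
  is_vertex v /\ is_vertex w /\ dist v w = k.

(* One step in F_k on representatives: either an edge, or a change of
   representative of the same vertex. *)
Definition stepF (k : Z) (v w : Z * Z) : Prop :=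
  is_vertex v /\ is_vertex w /\ (edgeF k v w \/ same_vertex v w).

Definition connectedF (k : Z) (v w : Z * Z) : Prop :=
  clos_refl_trans (Z * Z) (stepF k) v w.

(* Z/kZ is modelled by Z with congruence mod k. *)
Definition eqmod (k a b : Z) : Prop := a mod k = b mod k.

Definition unit_mod (k l : Z) : Prop := exists m, eqmod k (l * m) 1.

Definition admissible (k : Z) (x : Z * Z) : Prop :=
  forall l, eqmod k (l * fst x) 0 -> eqmod k (l * snd x) 0 -> eqmod k l 0.

(* equality of classes in L_k: x ~ y iff x = l y for a unit l of Z/kZ *)
Definition L_equiv (k : Z) (x y : Z * Z) : Prop :=
  exists l, unit_mod k l /\ eqmod k (fst x) (l * fst y) /\ eqmod k (snd x) (l * snd y).

Definition phi (k : Z) (v : Z * Z) : Z * Z := (fst v mod k, snd v mod k).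

From Stdlib Require Import ZArith Setoid Morphisms.
Open Scope Z_scope.

(* An edge p/q -- a/b of F_k means p b = q a mod k.  Writing x a + y b = 1,
   the scalar l = x p + y q then satisfies (p, q) = l (a, b) mod k, and
   exchanging the roles of the endpoints gives m with (a, b) = m (p, q);
   since p and q are coprime, l m = 1 mod k.  So phi_k is constant along
   edges, and L_k-equivalence, being an equivalence relation, is constant on
   components.  Nothing here uses k > 0. *)

Lemma eqmod_divide k a b : eqmod k a b <-> (k | a - b).
Proof. exact (Z.cong_iff_ex a b k). Qed.

Lemma mod_eqmod k a : eqmod k (a mod k) a.
Proof. exact (Z.mod_mod_divide a k k (Z.divide_refl k)). Qed.

#[export] Instance eqmod_equiv k : Equivalence (eqmod k).
Proof. unfold eqmod; split; red; congruence. Qed.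

#[export] Instance eqmod_add_wd k : Proper (eqmod k ==> eqmod k ==> eqmod k) Z.add.
Proof.
  intros a b Hab c d Hcd; apply eqmod_divide in Hab, Hcd; apply eqmod_divide.
  replace (a + c - (b + d)) with ((a - b) + (c - d)) by ring.
  now apply Z.divide_add_r.
Qed.

#[export] Instance eqmod_mul_wd k : Proper (eqmod k ==> eqmod k ==> eqmod k) Z.mul.
Proof.
  intros a b Hab c d Hcd; apply eqmod_divide in Hab, Hcd; apply eqmod_divide.
  replace (a * c - b * d) with ((a - b) * c + b * (c - d)) by ring.
  apply Z.divide_add_r; [apply Z.divide_mul_l | apply Z.divide_mul_r]; assumption.
Qed.

Lemma eqmod_scale_of_cross k p q a b :
  Z.gcd a b = 1 -> eqmod k (p * b) (q * a) ->
  exists l, eqmod k p (l * a) /\ eqmod k q (l * b).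
Proof.
  intros Hab Hcross; apply eqmod_divide in Hcross.
  destruct (Z.gcd_bezout a b 1 Hab) as [x [y Hxy]].
  exists (x * p + y * q); split; apply eqmod_divide.
  - replace (p - (x * p + y * q) * a)
      with (y * (p * b - q * a) + p * (1 - (x * a + y * b))) by ring.
    rewrite Hxy, Z.sub_diag, Z.mul_0_r, Z.add_0_r.
    now apply Z.divide_mul_r.
  - replace (q - (x * p + y * q) * b)
      with (- x * (p * b - q * a) + q * (1 - (x * a + y * b))) by ring.
    rewrite Hxy, Z.sub_diag, Z.mul_0_r, Z.add_0_r.
    now apply Z.divide_mul_r.
Qed.

Lemma eqmod_1_of_fixed_coprime k p q l :
  Z.gcd p q = 1 -> eqmod k p (l * p) -> eqmod k q (l * q) -> eqmod k l 1.
Proof.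
  intros Hpq Hp Hq.
  destruct (Z.gcd_bezout p q 1 Hpq) as [x [y Hxy]].
  transitivity (x * (l * p) + y * (l * q)).
  - replace (x * (l * p) + y * (l * q)) with (l * (x * p + y * q)) by ring.
    now rewrite Hxy, Z.mul_1_r.
  - now rewrite <- Hp, <- Hq, Hxy.
Qed.

#[export] Instance L_equiv_equiv k : Equivalence (L_equiv k).
Proof.
  split.
  - intros v; exists 1; repeat split; try exists 1; now rewrite Z.mul_1_l.
  - intros v w [l [[m Hlm] [H1 H2]]]; exists m; split.
    + exists l; now rewrite Z.mul_comm.
    + split; [rewrite H1 | rewrite H2];
        now rewrite Z.mul_assoc, (Z.mul_comm m l), Hlm, Z.mul_1_l.
  - intros u v w [l [[m Hlm] [H1 H2]]] [l' [[m' Hlm'] [H1' H2']]].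
    exists (l * l'); split.
    + exists (m * m').
      replace (l * l' * (m * m')) with ((l * m) * (l' * m')) by ring.
      now rewrite Hlm, Hlm'.
    + now rewrite H1, H2, H1', H2', !Z.mul_assoc.
Qed.

Lemma L_equiv_of_cross k v w :
  is_vertex v -> is_vertex w ->
  eqmod k (fst v * snd w) (snd v * fst w) -> L_equiv k v w.
Proof.
  destruct v as [p q], w as [a b]; unfold is_vertex; simpl.
  intros Hpq Hab Hcross.
  destruct (eqmod_scale_of_cross k p q a b Hab Hcross) as [l [Hp Hq]].
  assert (Hcross' : eqmod k (a * q) (b * p))
    by now rewrite (Z.mul_comm a), (Z.mul_comm b).
  destruct (eqmod_scale_of_cross k a b p q Hpq Hcross') as [m [Ha Hb]].
  exists l; split; [exists m | now split].
  apply (eqmod_1_of_fixed_coprime k p q); [exact Hpq | |].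
  - now rewrite Hp at 1; rewrite Ha, Z.mul_assoc.
  - now rewrite Hq at 1; rewrite Hb, Z.mul_assoc.
Qed.

Lemma L_equiv_of_step k v w : stepF k v w -> L_equiv k v w.
Proof.
  intros [Hv [Hw [[_ [_ Hdist]] | [-> | ->]]]].
  - apply L_equiv_of_cross; [exact Hv | exact Hw |].
    apply eqmod_divide; rewrite <- Hdist.
    apply Z.divide_abs_l, Z.divide_refl.
  - reflexivity.
  - exists (-1); split; [now exists (-1) |].
    split; unfold eqmod; cbn [fst snd]; f_equal; ring.
Qed.

Lemma L_equiv_phi k v w : L_equiv k v w -> L_equiv k (phi k v) (phi k w).
Proof.
  intros [l [Hl [H1 H2]]]; exists l; split; [exact Hl |]; simpl.
  now rewrite !mod_eqmod.
Qed.

Theorem lemma4p1 (k : Z) (hk : 0 < k) (v w : Z * Z) :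
  is_vertex v -> is_vertex w -> connectedF k v w ->
  L_equiv k (phi k v) (phi k w).
Proof.
  intros _ _ Hconn; apply L_equiv_phi.
  induction Hconn as [u u' Hstep | u | u u' u'' _ IH1 _ IH2].
  - now apply L_equiv_of_step.
  - reflexivity.
  - now transitivity u'.
Qed.
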